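(* Let $k\ge1$ and $q=2^{-1/k}$. The finite source $\mathcal{A}_k=\{(i,j):0\le i,j<k\}$ with weights $w(i,j)=q^{i+j}$ is $4$-uniform, and it has an optimal binary prefix code (tree) $T$ of fringe thickness at most $2$.
   Context: A finite source with weights $p_1\ge p_2\ge\dots\ge p_N>0$, $N\ge 2$, is $\alpha$-uniform ($\alpha\ge1$) if $p_1/p_N\le\alpha$. A prefix code is optimal for a finite weighted source if it minimizes $\sum_i p_i\ell_i$ over all binary prefix codes, $\ell_i$ the codeword lengths. The fringe thickness of a finite tree is the maximum difference between the depths of any two of its leaves. *)

From Stdlib Require Import Reals List Arith.
Import ListNotations.
Open Scope R_scope.

(* A finite weighted source is a list of weights (symbol n has weight nth n ws 0). *)

Definition alpha_uniform (ws : list R) (alpha : R) : Prop :=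
  1 <= alpha /\
  (forall x, In x ws -> 0 < x) /\
  (forall x y, In x ws -> In y ws -> x <= alpha * y).

Definition is_prefix (u v : list bool) : Prop := exists w, v = u ++ w.

Definition prefix_code (n : nat) (c : list (list bool)) : Prop :=
  length c = n /\
  forall a b, (a < n)%nat -> (b < n)%nat -> a <> b ->
    ~ is_prefix (nth a c []) (nth b c []).

Fixpoint cost (ws : list R) (c : list (list bool)) : R :=
  match ws, c with
  | p :: ws', w :: c' => p * INR (length w) + cost ws' c'
  | _, _ => 0
  end.

Definition optimal_code (ws : list R) (c : list (list bool)) : Prop :=
  prefix_code (length ws) c /\
  forall c', prefix_code (length ws) c' -> cost ws c <= cost ws c'.

(* Fringe thickness of the code tree: the leaves of the tree of a prefix code
   are exactly its codewords, at depth = codeword length; so it is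
   (max codeword length) - (min codeword length). *)
Definition min_list (l : list nat) : nat := fold_right Nat.min (hd 0%nat l) l.
Definition fringe_thickness (c : list (list bool)) : nat :=
  (list_max (map (@length bool) c) - min_list (map (@length bool) c))%nat.

Definition qk (k : nat) : R := Rpower 2 (- / INR k).
Definition source_A (k : nat) : list R :=
  flat_map (fun i => map (fun j => qk k ^ (i + j)) (seq 0 k)) (seq 0 k).

(* Since q^k = 1/2, thresholding the anti-diagonal s = i + j at t and t + k and giving
   lengths L, L + 1, L + 2 to the three bands puts every weight p = q^s in the dyadic
   window lam 2^-(l+1) <= p <= lam 2^-l of one multiplier lam = q^t 2^(L+1).  Each length
   l then minimizes p l + lam 2^-l, so by Kraft's inequality lengths with Kraft sum
   exactly 1 are optimal, and the canonical code realizes them.  Moving the tie-breaking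
   points one symbol at a time changes 2^(L+2) times the Kraft sum by 1 or 2, sweeping
   from its value A at t = 0 to 2A at t = k, so it hits a power of two.  All weights lie
   in [q^(2k-2), 1], hence 4-uniformity. *)

From Stdlib Require Import Reals List Arith Lia Lra Bool Permutation.
From Stdlib Require Import Sorting.Sorted Sorting.Mergesort.
Import ListNotations.
Open Scope R_scope.

(** * Prefix-free codes and Kraft's inequality *)

Definition incomparable (u v : list bool) : Prop := ~ is_prefix u v /\ ~ is_prefix v u.

Definition prefix_free (c : list (list bool)) : Prop :=
  NoDup c /\ forall u v, In u c -> In v c -> u <> v -> ~ is_prefix u v.

Lemma is_prefix_refl (u : list bool) : is_prefix u u.
Proof. exists []; now rewrite app_nil_r. Qed.

Lemma prefix_free_ForallOrdPairs (c : list (list bool)) :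
  ForallOrdPairs incomparable c -> prefix_free c.
Proof.
  intros H; split.
  - induction H as [|a c Ha _ IH]; constructor; auto.
    intros Hin; rewrite Forall_forall in Ha.
    apply (proj1 (Ha a Hin)), is_prefix_refl.
  - intros u v Hu Hv Huv.
    destruct (ForallOrdPairs_In H u v Hu Hv) as [E|[[E _]|[_ E]]]; tauto.
Qed.

Lemma prefix_free_perm (c1 c2 : list (list bool)) :
  Permutation c1 c2 -> prefix_free c2 -> prefix_free c1.
Proof.
  intros Hp [Hn Hpre]; split.
  - exact (Permutation_NoDup (Permutation_sym Hp) Hn).
  - intros u v Hu Hv; apply Hpre; eapply Permutation_in; eauto.
Qed.

Lemma prefix_code_prefix_free (n : nat) (c : list (list bool)) :
  prefix_code n c -> prefix_free c.
Proof.
  intros [Hl Hp]; split.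
  - apply (NoDup_nth c []); intros i j Hi Hj E.
    destruct (Nat.eq_dec i j) as [|Hij]; auto; exfalso.
    apply (Hp i j ltac:(lia) ltac:(lia) Hij); rewrite E; apply is_prefix_refl.
  - intros u v Hu Hv Huv.
    apply (In_nth c u []) in Hu as [i [Hi <-]]; apply (In_nth c v []) in Hv as [j [Hj <-]].
    apply Hp; try lia; intros ->; auto.
Qed.

Lemma prefix_free_prefix_code (c : list (list bool)) :
  prefix_free c -> prefix_code (length c) c.
Proof.
  intros [Hn Hp]; split; auto; intros a b Ha Hb Hab.
  apply Hp; try apply nth_In; auto.
  intros E; apply Hab; eapply NoDup_nth; eauto.
Qed.

Section CanonicalCode.
Open Scope nat_scope.

Fixpoint binary_word (l x : nat) : list bool :=
  match l with 0 => [] | S l' => binary_word l' (x / 2) ++ [Nat.odd x] end.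

Lemma binary_word_length (l x : nat) : length (binary_word l x) = l.
Proof.
  revert x; induction l as [|l IH]; intros x; simpl; auto.
  rewrite length_app, IH; simpl; lia.
Qed.

Lemma binary_word_add (a d y : nat) :
  binary_word (a + d) y = binary_word a (y / 2 ^ d) ++ binary_word d y.
Proof.
  revert y; induction d as [|d IH]; intros y.
  - rewrite Nat.add_0_r, Nat.pow_0_r, Nat.div_1_r; simpl; now rewrite app_nil_r.
  - rewrite Nat.add_succ_r; cbn [binary_word].
    now rewrite IH, <- app_assoc, Nat.Div0.div_div, Nat.pow_succ_r'.
Qed.

Lemma binary_word_inj (l x y : nat) :
  binary_word l x = binary_word l y -> x < 2 ^ l -> y < 2 ^ l -> x = y.
Proof.
  revert x y; induction l as [|l IH]; intros x y H Hx Hy; cbn [binary_word] in *.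
  - rewrite Nat.pow_0_r in *; lia.
  - rewrite Nat.pow_succ_r' in Hx, Hy; apply app_inj_tail in H as [Hhalf Hodd].
    assert (x / 2 = y / 2) as E
      by (apply IH; auto; apply Nat.Div0.div_lt_upper_bound; lia).
    rewrite (Nat.div2_odd x), (Nat.div2_odd y), !Nat.div2_div, E, Hodd; reflexivity.
Qed.

Lemma app_inj_length {A : Type} (u1 v1 u2 v2 : list A) :
  u1 ++ v1 = u2 ++ v2 -> length u1 = length u2 -> u1 = u2.
Proof.
  revert u2; induction u1 as [|a u1 IH]; intros [|b u2] H Hl; simpl in *; try lia; auto.
  injection H as -> H; f_equal; apply (IH u2); auto.
Qed.

(* The words are the dyadic intervals [x/2^l, (x+1)/2^l) and [y/2^l2, (y+1)/2^l2);
   the hypothesis says the first ends before the second starts. *)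
Lemma binary_word_incomparable (l x l2 y : nat) :
  l <= l2 -> x < 2 ^ l -> y < 2 ^ l2 -> (x + 1) * 2 ^ (l2 - l) <= y ->
  incomparable (binary_word l x) (binary_word l2 y).
Proof.
  intros Hl Hx Hy Hxy; split.
  - intros [z Hz].
    replace l2 with (l + (l2 - l)) in Hz by lia.
    rewrite binary_word_add in Hz.
    apply app_inj_length in Hz; [|now rewrite !binary_word_length].
    apply binary_word_inj in Hz; auto.
    + assert (x + 1 <= y / 2 ^ (l2 - l))
        by (apply Nat.div_le_lower_bound; [apply Nat.pow_nonzero|]; lia).
      lia.
    + apply Nat.Div0.div_lt_upper_bound; rewrite <- Nat.pow_add_r.
      now replace (l2 - l + l) with l2 by lia.
  - intros [z Hz].
    assert (Hlen := f_equal (@length bool) Hz).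
    rewrite length_app, !binary_word_length in Hlen.
    assert (l2 = l) by lia; subst l2.
    destruct z; [|simpl in Hlen; lia]; rewrite app_nil_r in Hz.
    apply binary_word_inj in Hz; auto.
    rewrite Nat.sub_diag in Hxy; simpl in Hxy; lia.
Qed.

Definition kraft_count (M : nat) (ls : list nat) : nat :=
  list_sum (map (fun l => 2 ^ (M - l)) ls).

(* For nondecreasing lengths: after a word of length p and value a - 1, the word
   of length l receives the next free value a * 2^(l-p). *)
Fixpoint canonical_code (p a : nat) (ls : list nat) : list (list bool) :=
  match ls with
  | [] => []
  | l :: ls' => binary_word l (a * 2 ^ (l - p)) :: canonical_code l (a * 2 ^ (l - p) + 1) ls'
  end.

Lemma canonical_code_lengths (p a : nat) (ls : list nat) :
  map (@length bool) (canonical_code p a ls) = ls.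
Proof.
  revert p a; induction ls as [|l ls IH]; intros p a; simpl; auto.
  now rewrite binary_word_length, IH.
Qed.

Lemma pow2_sub_mul (a b c : nat) : a <= b <= c -> 2 ^ (b - a) * 2 ^ (c - b) = 2 ^ (c - a).
Proof. intros H; rewrite <- Nat.pow_add_r; f_equal; lia. Qed.

Lemma canonical_code_cons_sorted (M l p : nat) (ls : list nat) :
  StronglySorted le (l :: ls) -> Forall (fun x => p <= x <= M) (l :: ls) ->
  StronglySorted le ls /\ Forall (fun x => l <= x <= M) ls.
Proof.
  intros Hsorted Hrange.
  apply StronglySorted_inv in Hsorted as [Hs Hl]; split; auto.
  apply Forall_inv in Hrange as HlM; apply Forall_inv_tail in Hrange.
  rewrite Forall_forall in *; intros x Hx; specialize (Hl x Hx); specialize (Hrange x Hx); lia.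
Qed.

Lemma canonical_code_cons_room (M l p a : nat) (ls : list nat) :
  p <= l <= M -> a * 2 ^ (M - p) + kraft_count M (l :: ls) <= 2 ^ M ->
  (a * 2 ^ (l - p) + 1) * 2 ^ (M - l) + kraft_count M ls <= 2 ^ M.
Proof.
  intros Hl Hroom; pose proof (pow2_sub_mul p l M Hl).
  unfold kraft_count in Hroom; simpl in Hroom; fold (kraft_count M ls) in Hroom; nia.
Qed.

Lemma canonical_code_head_bound (M l p a : nat) (ls : list nat) :
  p <= l <= M -> a * 2 ^ (M - p) + kraft_count M (l :: ls) <= 2 ^ M ->
  a * 2 ^ (l - p) < 2 ^ l.
Proof.
  intros Hl Hroom; pose proof (canonical_code_cons_room M l p a ls Hl Hroom).
  assert (2 ^ (M - l) * 2 ^ l = 2 ^ M) by (rewrite <- Nat.pow_add_r; f_equal; lia).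
  assert (0 < 2 ^ (M - l)) by (apply Nat.neq_0_lt_0, Nat.pow_nonzero; lia).
  nia.
Qed.

Lemma canonical_code_words (M : nat) (ls : list nat) : forall p a,
  StronglySorted le ls -> Forall (fun x => p <= x <= M) ls ->
  a * 2 ^ (M - p) + kraft_count M ls <= 2 ^ M ->
  forall w, In w (canonical_code p a ls) ->
  exists l b, w = binary_word l b /\ p <= l /\ a * 2 ^ (l - p) <= b /\ b < 2 ^ l.
Proof.
  induction ls as [|l ls IH]; intros p a Hs Hf Hk w Hw; [contradiction|].
  destruct Hw as [<-|Hw].
  - exists l, (a * 2 ^ (l - p)); apply Forall_inv in Hf as Hl.
    repeat split; try lia; eapply canonical_code_head_bound; eauto.
  - destruct (canonical_code_cons_sorted M l p ls Hs Hf) as [Hs' Hf'].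
    destruct (IH l _ Hs' Hf' (canonical_code_cons_room M l p a ls (Forall_inv Hf) Hk) w Hw)
      as [l2 [b [-> [Hl2 [Hb1 Hb2]]]]].
    apply Forall_inv in Hf; pose proof (pow2_sub_mul p l l2 ltac:(lia)).
    exists l2, b; repeat split; try lia; nia.
Qed.

Lemma canonical_code_incomparable (M : nat) (ls : list nat) : forall p a,
  StronglySorted le ls -> Forall (fun x => p <= x <= M) ls ->
  a * 2 ^ (M - p) + kraft_count M ls <= 2 ^ M ->
  ForallOrdPairs incomparable (canonical_code p a ls).
Proof.
  induction ls as [|l ls IH]; intros p a Hs Hf Hk; simpl; [constructor|].
  destruct (canonical_code_cons_sorted M l p ls Hs Hf) as [Hs' Hf'].
  pose proof (canonical_code_cons_room M l p a ls (Forall_inv Hf) Hk) as Hk'.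
  constructor; [|now apply IH].
  apply Forall_forall; intros w Hw.
  destruct (canonical_code_words M ls l _ Hs' Hf' Hk' w Hw) as [l2 [b [-> [Hl2 [Hb1 Hb2]]]]].
  apply binary_word_incomparable; auto.
  exact (canonical_code_head_bound M l p a ls (Forall_inv Hf) Hk).
Qed.

Lemma sort_StronglySorted_le (ls : list nat) : StronglySorted le (NatSort.sort ls).
Proof.
  assert (Htrans : RelationClasses.Transitive (fun x y => is_true (NatOrder.leb x y))).
  { intros x y z Hxy Hyz; apply (proj2 (Nat.leb_le x z)).
    apply (proj1 (Nat.leb_le x y)) in Hxy; apply (proj1 (Nat.leb_le y z)) in Hyz; lia. }
  induction (NatSort.StronglySorted_sort ls Htrans) as [|x l _ IH Hx]; constructor; auto.
  eapply Forall_impl; [|exact Hx]; intros y; apply (proj1 (Nat.leb_le x y)).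
Qed.

Lemma kraft_count_converse (M : nat) (ls : list nat) :
  Forall (fun l => l <= M) ls -> kraft_count M ls <= 2 ^ M ->
  exists c, map (@length bool) c = ls /\ prefix_free c.
Proof.
  intros Hf Hk.
  pose proof (NatSort.Permuted_sort ls) as Hp.
  assert (Hf' : Forall (fun l => 0 <= l <= M) (NatSort.sort ls)).
  { rewrite Forall_forall in *; intros x Hx.
    apply (Permutation_in _ (Permutation_sym Hp)), Hf in Hx; lia. }
  assert (Hk' : 0 * 2 ^ (M - 0) + kraft_count M (NatSort.sort ls) <= 2 ^ M).
  { unfold kraft_count in *; rewrite <- (Permutation_list_sum (Permutation_map _ Hp)); lia. }
  rewrite <- (canonical_code_lengths 0 0 (NatSort.sort ls)) in Hp.
  destruct (Permutation_map_inv _ _ Hp) as [c [-> Hc]].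
  exists c; split; auto.
  eapply prefix_free_perm; [apply Permutation_sym, Hc|].
  apply prefix_free_ForallOrdPairs, (canonical_code_incomparable M); auto.
  apply sort_StronglySorted_le.
Qed.

End CanonicalCode.

Definition kraft_sum (ls : list nat) : R := fold_right Rplus 0 (map (fun l => (/ 2) ^ l) ls).

Lemma pow_inv2_mul_pow2 (n : nat) : (/ 2) ^ n * 2 ^ n = 1.
Proof. rewrite <- Rpow_mult_distr, Rinv_l, pow1; lra. Qed.

Lemma kraft_sum_count (M : nat) (ls : list nat) :
  Forall (fun l => (l <= M)%nat) ls -> kraft_sum ls * 2 ^ M = INR (kraft_count M ls).
Proof.
  induction 1 as [|l ls Hl _ IH]; unfold kraft_sum, kraft_count in *; simpl; [lra|].
  rewrite plus_INR, <- IH, pow_INR; simpl INR; replace (1 + 1) with 2 by lra.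
  replace (2 ^ M) with (2 ^ l * 2 ^ (M - l)) by (rewrite <- pow_add; f_equal; lia).
  transitivity ((/ 2) ^ l * 2 ^ l * 2 ^ (M - l)
                + fold_right Rplus 0 (map (fun l => (/ 2) ^ l) ls) * (2 ^ l * 2 ^ (M - l)));
    [ring|].
  rewrite pow_inv2_mul_pow2; ring.
Qed.

Theorem kraft_converse (ls : list nat) :
  kraft_sum ls <= 1 -> exists c, map (@length bool) c = ls /\ prefix_free c.
Proof.
  intros Hk; apply (kraft_count_converse (list_max ls)); [now apply list_max_le|].
  apply INR_le; rewrite pow_INR, <- kraft_sum_count by now apply list_max_le.
  simpl INR; replace (1 + 1) with 2 by lra.
  pose proof (pow_lt 2 (list_max ls) ltac:(lra)); nra.
Qed.

Definition starts_with (b : bool) (w : list bool) : bool :=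
  match w with x :: _ => Bool.eqb x b | [] => false end.

Definition subtree (b : bool) (c : list (list bool)) : list (list bool) :=
  map (@tl bool) (filter (starts_with b) c).

Lemma kraft_sum_subtrees (c : list (list bool)) : ~ In [] c ->
  kraft_sum (map (@length bool) c) =
  / 2 * kraft_sum (map (@length bool) (subtree false c))
  + / 2 * kraft_sum (map (@length bool) (subtree true c)).
Proof.
  induction c as [|w c IH]; intros Hnil; unfold kraft_sum, subtree in *; simpl; [lra|].
  rewrite IH by (intros H; apply Hnil; now right).
  destruct w as [|[] w]; [exfalso; apply Hnil; now left| |]; simpl; lra.
Qed.

Lemma subtree_prefix_free (b : bool) (c : list (list bool)) :
  prefix_free c -> prefix_free (subtree b c).
Proof.
  intros [Hn Hp]; split.
  - apply NoDup_map_NoDup_ForallPairs; [|now apply NoDup_filter].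
    intros [|x u] [|y v] Hu Hv E; apply filter_In in Hu as [_ Hu];
      apply filter_In in Hv as [_ Hv]; simpl in *; try discriminate.
    apply Bool.eqb_prop in Hu, Hv; congruence.
  - intros u v Hu Hv Huv [z Hz].
    apply in_map_iff in Hu as [[|x u'] [<- Hu]]; apply in_map_iff in Hv as [[|y v'] [<- Hv]];
      apply filter_In in Hu as [Hu Hbu]; apply filter_In in Hv as [Hv Hbv]; simpl in *;
      try discriminate.
    apply Bool.eqb_prop in Hbu, Hbv; subst x y.
    apply (Hp (b :: u') (b :: v') Hu Hv); [congruence|].
    exists z; simpl; congruence.
Qed.

Lemma kraft_sum_nil_words (c : list (list bool)) :
  NoDup c -> (forall w, In w c -> w = []) -> kraft_sum (map (@length bool) c) <= 1.
Proof.
  intros Hn Hnil; destruct c as [|u [|v c]]; unfold kraft_sum; simpl.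
  - lra.
  - rewrite (Hnil u (or_introl eq_refl)); simpl; lra.
  - exfalso; inversion Hn as [|? ? Huv]; apply Huv.
    rewrite (Hnil u (or_introl eq_refl)), (Hnil v (or_intror (or_introl eq_refl))); now left.
Qed.

Theorem kraft_inequality (c : list (list bool)) :
  prefix_free c -> kraft_sum (map (@length bool) c) <= 1.
Proof.
  remember (list_max (map (@length bool) c)) as M eqn:HM.
  assert (Hbound : forall w, In w c -> (length w <= M)%nat).
  { intros w Hw; subst M.
    apply (Forall_forall (fun l => (l <= _)%nat) (map (@length bool) c)); [|now apply in_map].
    now apply list_max_le. }
  clear HM; revert c Hbound; induction M as [|M IH]; intros c Hbound Hpf.
  - apply kraft_sum_nil_words; [apply Hpf|]; intros [|x w] Hw; auto.
    specialize (Hbound _ Hw); simpl in Hbound; lia.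
  - destruct (in_dec (list_eq_dec Bool.bool_dec) [] c) as [Hin|Hnin].
    + apply kraft_sum_nil_words; [apply Hpf|]; intros w Hw.
      destruct (list_eq_dec Bool.bool_dec w []) as [|Hw0]; auto; exfalso.
      apply (proj2 Hpf [] w Hin Hw (not_eq_sym Hw0)); now exists w.
    + rewrite kraft_sum_subtrees by exact Hnin.
      assert (Hsub : forall b, kraft_sum (map (@length bool) (subtree b c)) <= 1).
      { intros b; apply IH; [|now apply subtree_prefix_free].
        intros w Hw; apply in_map_iff in Hw as [w0 [<- Hw0]]; apply filter_In in Hw0 as [Hw0 _].
        specialize (Hbound w0 Hw0); destruct w0; simpl in *; lia. }
      pose proof (Hsub false); pose proof (Hsub true); lra.
Qed.

(** * Optimality from dyadic windows *)

Lemma pow_le_pow_antimono (q : R) (a b : nat) : 0 < q <= 1 -> (a <= b)%nat -> q ^ b <= q ^ a.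
Proof.
  intros Hq Hab; replace b with (a + (b - a))%nat by lia; rewrite pow_add.
  assert (0 < q ^ a) by (apply pow_lt; lra).
  assert (q ^ (b - a) <= 1) by (rewrite <- (pow1 (b - a)); apply pow_incr; lra).
  nra.
Qed.

Lemma pow_inv2_antimono (a b : nat) : (a <= b)%nat -> (/ 2) ^ b <= (/ 2) ^ a.
Proof. apply pow_le_pow_antimono; lra. Qed.

Definition dyadic_window (lam p : R) (l : nat) : Prop :=
  lam * (/ 2) ^ (l + 1) <= p <= lam * (/ 2) ^ l.

(* The penalized length m |-> p m + lam 2^-m is convex in m, and the window says
   that its increments change sign at l. *)
Lemma dyadic_window_minimizes (lam p : R) (l : nat) : 0 < lam -> dyadic_window lam p l ->
  forall m, p * INR l + lam * (/ 2) ^ l <= p * INR m + lam * (/ 2) ^ m.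
Proof.
  intros Hlam [Hlo Hhi].
  set (f m := p * INR m + lam * (/ 2) ^ m).
  assert (Hstep : forall m, f (S m) = f m + p - lam * (/ 2) ^ (S m))
    by (intros m; unfold f; rewrite S_INR; simpl; field).
  assert (Hscale : forall a b, (a <= b)%nat -> lam * (/ 2) ^ b <= lam * (/ 2) ^ a)
    by (intros a b Hab; apply Rmult_le_compat_l; [lra|now apply pow_inv2_antimono]).
  assert (Hup : forall d, f l <= f (l + d)%nat).
  { induction d as [|d IH]; [rewrite Nat.add_0_r; lra|].
    rewrite Nat.add_succ_r, Hstep; pose proof (Hscale (l + 1)%nat (S (l + d)) ltac:(lia)); lra. }
  assert (Hdown : forall d m, (m + d = l)%nat -> f l <= f m).
  { induction d as [|d IH]; intros m Hm; [subst; rewrite Nat.add_0_r; lra|].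
    specialize (IH (S m) ltac:(lia)); rewrite Hstep in IH.
    pose proof (Hscale (S m) l ltac:(lia)); lra. }
  intros m; destruct (Nat.le_ge_cases l m).
  - replace m with (l + (m - l))%nat by lia; apply Hup.
  - apply (Hdown (l - m)%nat); lia.
Qed.

Fixpoint expected_length (ws : list R) (ls : list nat) : R :=
  match ws, ls with
  | p :: ws', l :: ls' => p * INR l + expected_length ws' ls'
  | _, _ => 0
  end.

Lemma cost_expected_length (ws : list R) (c : list (list bool)) :
  cost ws c = expected_length ws (map (@length bool) c).
Proof. revert c; induction ws as [|p ws IH]; intros [|w c]; simpl; auto; now rewrite IH. Qed.

Lemma expected_length_penalized_le (lam : R) (ws : list R) (ls : list nat) :
  0 < lam -> Forall2 (dyadic_window lam) ws ls ->
  forall ls', length ls' = length ws ->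
  expected_length ws ls + lam * kraft_sum ls <= expected_length ws ls' + lam * kraft_sum ls'.
Proof.
  intros Hlam HF; induction HF as [|p l ws ls Hpl _ IH]; intros [|l' ls'] Hlen;
    simpl in Hlen; try discriminate; unfold kraft_sum in *; simpl; [lra|].
  specialize (IH ls' ltac:(lia)).
  pose proof (dyadic_window_minimizes lam p l Hlam Hpl l'); lra.
Qed.

(* Lagrangian relaxation of the Kraft constraint, with multiplier lam. *)
Theorem optimal_code_of_dyadic_window (lam : R) (ws : list R) (c : list (list bool)) :
  0 < lam -> Forall2 (dyadic_window lam) ws (map (@length bool) c) ->
  kraft_sum (map (@length bool) c) = 1 -> prefix_free c -> optimal_code ws c.
Proof.
  intros Hlam HF Hk Hpf.
  assert (Hlen : length c = length ws)
    by (rewrite <- (length_map (@length bool)); symmetry; eapply Forall2_length; eauto).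
  split; [rewrite <- Hlen; now apply prefix_free_prefix_code|].
  intros c' Hc'; rewrite !cost_expected_length.
  pose proof (kraft_inequality c' (prefix_code_prefix_free _ _ Hc')) as Hkraft.
  assert (Hlen' : length (map (@length bool) c') = length ws) by (rewrite length_map; apply Hc').
  pose proof (expected_length_penalized_le lam ws _ Hlam HF _ Hlen'); nra.
Qed.

Lemma fold_right_min_ge (L d : nat) (l : list nat) :
  (L <= d)%nat -> Forall (fun x => (L <= x)%nat) l -> (L <= fold_right Nat.min d l)%nat.
Proof. intros Hd; induction 1; simpl; lia. Qed.

Lemma fringe_thickness_le (c : list (list bool)) (L d : nat) :
  (forall w, In w c -> (L <= length w <= L + d)%nat) -> (fringe_thickness c <= d)%nat.
Proof.
  intros Hc; unfold fringe_thickness, min_list.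
  assert (Hall : Forall (fun x => (L <= x <= L + d)%nat) (map (@length bool) c)).
  { apply Forall_forall; intros x Hx; apply in_map_iff in Hx as [w [<- Hw]]; now apply Hc. }
  assert (Hmax : (list_max (map (@length bool) c) <= L + d)%nat).
  { apply list_max_le; eapply Forall_impl; [|exact Hall]; simpl; lia. }
  destruct (map (@length bool) c) as [|x xs]; simpl hd; [simpl; lia|].
  assert (L <= fold_right Nat.min x (x :: xs))%nat; [|lia].
  apply fold_right_min_ge; [apply Forall_inv in Hall; lia|].
  eapply Forall_impl; [|exact Hall]; simpl; lia.
Qed.

(** * Length assignments on the grid *)

Section Grid.
Open Scope nat_scope.

Definition grid {A : Type} (k : nat) (f : nat -> nat -> A) : list A :=
  flat_map (fun i => map (f i) (seq 0 k)) (seq 0 k).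

Lemma In_grid {A : Type} (k : nat) (f : nat -> nat -> A) (x : A) :
  In x (grid k f) <-> exists i j, i < k /\ j < k /\ x = f i j.
Proof.
  unfold grid; rewrite in_flat_map; split.
  - intros [i [Hi Hx]]; apply in_map_iff in Hx as [j [<- Hj]]; apply in_seq in Hi, Hj.
    exists i, j; repeat split; lia.
  - intros [i [j [Hi [Hj ->]]]]; exists i; split; [apply in_seq; lia|].
    apply in_map, in_seq; lia.
Qed.

Lemma grid_ext {A : Type} (k : nat) (f g : nat -> nat -> A) :
  (forall i j, i < k -> j < k -> f i j = g i j) -> grid k f = grid k g.
Proof.
  intros H; unfold grid; rewrite !flat_map_concat_map; f_equal.
  apply map_ext_in; intros i Hi; apply map_ext_in; intros j Hj.
  apply in_seq in Hi, Hj; apply H; lia.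
Qed.

Lemma map_grid {A B : Type} (F : A -> B) (k : nat) (f : nat -> nat -> A) :
  map F (grid k f) = grid k (fun i j => F (f i j)).
Proof.
  unfold grid; rewrite !flat_map_concat_map, concat_map, !map_map; f_equal.
  apply map_ext; intros i; apply map_map.
Qed.

Lemma Forall2_map_in {A B C : Type} (R : A -> B -> Prop) (f : C -> A) (g : C -> B) (l : list C) :
  (forall x, In x l -> R (f x) (g x)) -> Forall2 R (map f l) (map g l).
Proof.
  induction l as [|x l IH]; intros H; simpl; constructor.
  - apply H; now left.
  - apply IH; intros y Hy; apply H; now right.
Qed.

Lemma Forall2_grid {A B : Type} (R : A -> B -> Prop) (k : nat)
  (f : nat -> nat -> A) (g : nat -> nat -> B) :
  (forall i j, i < k -> j < k -> R (f i j) (g i j)) -> Forall2 R (grid k f) (grid k g).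
Proof.
  intros H; unfold grid.
  assert (Hrows : forall rows, (forall i, In i rows -> i < k) ->
    Forall2 R (flat_map (fun i => map (f i) (seq 0 k)) rows)
              (flat_map (fun i => map (g i) (seq 0 k)) rows)).
  { induction rows as [|i rows IH]; intros Hrows; simpl; [constructor|].
    apply Forall2_app.
    - apply Forall2_map_in; intros j Hj; apply in_seq in Hj; apply H; [apply Hrows; now left|lia].
    - apply IH; intros i' Hi'; apply Hrows; now right. }
  apply Hrows; intros i Hi; apply in_seq in Hi; lia.
Qed.

Lemma list_sum_flat_map {A : Type} (F : A -> list nat) (l : list A) :
  list_sum (flat_map F l) = list_sum (map (fun x => list_sum (F x)) l).
Proof. induction l as [|x l IH]; simpl; auto; now rewrite list_sum_app, IH. Qed.

Lemma list_sum_map_add {A : Type} (f g : A -> nat) (l : list A) :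
  list_sum (map (fun x => f x + g x) l) = list_sum (map f l) + list_sum (map g l).
Proof. induction l; simpl; lia. Qed.

Lemma list_sum_map_mul {A : Type} (c : nat) (f : A -> nat) (l : list A) :
  list_sum (map (fun x => c * f x) l) = c * list_sum (map f l).
Proof. induction l; simpl; lia. Qed.

Lemma grid_sum_add (k : nat) (f g : nat -> nat -> nat) :
  list_sum (grid k (fun i j => f i j + g i j)) = list_sum (grid k f) + list_sum (grid k g).
Proof.
  unfold grid; rewrite !list_sum_flat_map, <- list_sum_map_add; f_equal.
  apply map_ext; intros i; apply list_sum_map_add.
Qed.

Lemma grid_sum_mul (k c : nat) (f : nat -> nat -> nat) :
  list_sum (grid k (fun i j => c * f i j)) = c * list_sum (grid k f).
Proof.
  unfold grid; rewrite !list_sum_flat_map, <- list_sum_map_mul; f_equal.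
  apply map_ext; intros i; apply list_sum_map_mul.
Qed.

Lemma list_sum_seq_indicator (k j0 : nat) :
  list_sum (map (fun j => if j =? j0 then 1 else 0) (seq 0 k)) = if j0 <? k then 1 else 0.
Proof.
  induction k as [|k IH]; [reflexivity|].
  rewrite seq_S, map_app, list_sum_app, IH; simpl.
  destruct (Nat.ltb_spec j0 k), (Nat.eqb_spec k j0), (Nat.ltb_spec j0 (S k)); lia.
Qed.

Lemma grid_sum_indicator (k i0 j0 : nat) : i0 < k -> j0 < k ->
  list_sum (grid k (fun i j => if (i =? i0) && (j =? j0) then 1 else 0)) = 1.
Proof.
  intros Hi Hj; unfold grid; rewrite list_sum_flat_map.
  rewrite (map_ext _ (fun i => if i =? i0 then 1 else 0)).
  - rewrite list_sum_seq_indicator; destruct (Nat.ltb_spec i0 k); lia.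
  - intros i; destruct (Nat.eqb_spec i i0); simpl.
    + rewrite list_sum_seq_indicator; destruct (Nat.ltb_spec j0 k); lia.
    + induction (seq 0 k); simpl; auto.
Qed.

End Grid.

Ltac case_comparisons := repeat (match goal with
  | |- context[?a <? ?b] => destruct (Nat.ltb_spec a b)
  | |- context[?a =? ?b] => destruct (Nat.eqb_spec a b)
  end; simpl).

Section DepthOffsets.
Open Scope nat_scope.

Definition depth_offset (k t h g i j : nat) : nat :=
  let s := i + j in
  if s <? t then 0 else if s =? t then (if i <? h then 0 else 1)
  else if s <? k + t then 1 else if s =? k + t then (if i <? t + 1 + g then 1 else 2) else 2.

(* 2^(L+2) times the Kraft sum of the lengths L + depth_offset. *)
Definition offset_kraft_count (k t h g : nat) : nat :=
  list_sum (grid k (fun i j => 2 ^ (2 - depth_offset k t h g i j))).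

Lemma depth_offset_le_2 (k t h g i j : nat) : depth_offset k t h g i j <= 2.
Proof. unfold depth_offset; case_comparisons; lia. Qed.

Lemma offset_kraft_count_succ_h (k t h g : nat) : h <= t -> t < k ->
  offset_kraft_count k t (S h) g = offset_kraft_count k t h g + 2.
Proof.
  intros Hh Ht; unfold offset_kraft_count.
  rewrite (grid_ext k _ (fun i j => 2 ^ (2 - depth_offset k t h g i j)
                                    + 2 * (if (i =? h) && (j =? t - h) then 1 else 0))).
  - rewrite grid_sum_add, grid_sum_mul, grid_sum_indicator by lia; lia.
  - intros i j Hi Hj; unfold depth_offset; case_comparisons; lia.
Qed.

Lemma offset_kraft_count_succ_g (k t h g : nat) : t + 1 + g < k ->
  offset_kraft_count k t h (S g) = offset_kraft_count k t h g + 1.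
Proof.
  intros Hg; unfold offset_kraft_count.
  rewrite (grid_ext k _ (fun i j => 2 ^ (2 - depth_offset k t h g i j)
                          + 1 * (if (i =? t + 1 + g) && (j =? k - 1 - g) then 1 else 0))).
  - rewrite grid_sum_add, grid_sum_mul, grid_sum_indicator by lia; lia.
  - intros i j Hi Hj; unfold depth_offset; case_comparisons; lia.
Qed.

Lemma offset_kraft_count_hg (k t h g : nat) : t < k -> h <= t + 1 -> t + 1 + g <= k ->
  offset_kraft_count k t h g = offset_kraft_count k t 0 0 + 2 * h + g.
Proof.
  intros Ht Hh Hg; induction g as [|g IHg].
  - induction h as [|h IHh]; [lia|].
    rewrite offset_kraft_count_succ_h, IHh by lia; lia.
  - rewrite offset_kraft_count_succ_g, IHg by lia; lia.
Qed.

Lemma offset_kraft_count_succ_t (k t : nat) : t < k ->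
  offset_kraft_count k (S t) 0 0 = offset_kraft_count k t 0 0 + 2 * (t + 1) + (k - 1 - t).
Proof.
  intros Ht; rewrite <- offset_kraft_count_hg by lia.
  unfold offset_kraft_count; f_equal; apply grid_ext; intros i j Hi Hj.
  unfold depth_offset; case_comparisons; lia.
Qed.

Lemma offset_kraft_count_k (k : nat) :
  offset_kraft_count k k 0 0 = 2 * offset_kraft_count k 0 0 0.
Proof.
  unfold offset_kraft_count; rewrite <- grid_sum_mul; f_equal; apply grid_ext.
  intros i j Hi Hj; unfold depth_offset; case_comparisons; lia.
Qed.

Lemma offset_kraft_count_ge_2 (k : nat) : 1 <= k -> 2 <= offset_kraft_count k 0 0 0.
Proof.
  intros Hk; unfold offset_kraft_count, grid.
  destruct k as [|k]; [lia|]; simpl; unfold depth_offset; simpl; lia.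
Qed.

Lemma discrete_ivt (f : nat -> nat) (n P : nat) : 0 < n -> f 0 <= P -> P <= f n ->
  exists t, t < n /\ f t <= P <= f (S t).
Proof.
  intros Hn H0; induction n as [|n IH]; [lia|]; intros Hfn.
  destruct (Nat.le_gt_cases P (f n)) as [Hle|Hgt].
  - destruct n as [|n]; [exists 0; lia|].
    destruct (IH ltac:(lia) Hle) as [t Ht]; exists t; lia.
  - exists n; lia.
Qed.

Lemma exists_pow2_between (A : nat) : 2 <= A -> exists L, A <= 2 ^ (L + 2) <= 2 * A.
Proof.
  intros HA; destruct (Nat.log2_spec A ltac:(lia)) as [Hlo Hhi].
  assert (Hlog : 1 <= Nat.log2 A)
    by (apply Nat.log2_le_mono in HA; change (Nat.log2 2) with 1 in HA; lia).
  exists (Nat.log2 A - 1); replace (Nat.log2 A - 1 + 2) with (S (Nat.log2 A)) by lia.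
  rewrite Nat.pow_succ_r' in *; lia.
Qed.

Lemma split_double_plus (d a b : nat) : d <= 2 * a + b -> (b = 0 -> Nat.Even d) ->
  exists h g, h <= a /\ g <= b /\ d = 2 * h + g.
Proof.
  intros Hd Hb; destruct (Nat.le_gt_cases d (2 * a)) as [Hle|Hgt].
  - destruct (Nat.Even_or_Odd d) as [[m Hm]|[m Hm]]; [exists m, 0; lia|].
    destruct b as [|b]; [destruct (Hb eq_refl) as [m' Hm']; lia|].
    exists m, 1; lia.
  - exists a, (d - 2 * a); lia.
Qed.

(* The counts C(t, h, g) grow by steps of 1 and 2 from C(0,0,0) = A to C(k,0,0) = 2A,
   so they hit the power of two between A and 2A; parity is fixed by the unit steps in g. *)
Lemma exists_offset_parameters (k : nat) : 1 <= k ->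
  exists t h g L, t < k /\ offset_kraft_count k t h g = 2 ^ (L + 2).
Proof.
  intros Hk; set (f t := offset_kraft_count k t 0 0).
  destruct (exists_pow2_between (f 0) (offset_kraft_count_ge_2 k Hk)) as [L HL].
  assert (Hfk : f k = 2 * f 0) by apply offset_kraft_count_k.
  destruct (discrete_ivt f k (2 ^ (L + 2)) ltac:(lia) ltac:(lia) ltac:(lia)) as [t [Ht HP]].
  assert (Hstep : f (S t) = f t + 2 * (t + 1) + (k - 1 - t)) by now apply offset_kraft_count_succ_t.
  assert (Hpow : 2 ^ (L + 2) = 4 * 2 ^ L) by (rewrite Nat.pow_add_r; simpl; lia).
  destruct (split_double_plus (2 ^ (L + 2) - f t) (t + 1) (k - 1 - t)) as [h [g [Hh [Hg Hd]]]].
  - lia.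
  - intros Hlast; assert (S t = k) as Ek by lia; rewrite Ek in Hstep.
    exists (2 * 2 ^ L + t + 1 - f 0); lia.
  - exists t, h, g, L; repeat split; try lia.
    rewrite offset_kraft_count_hg by lia; fold (f t); lia.
Qed.

End DepthOffsets.

(** * The source A_k *)

Lemma qk_pos (k : nat) : 0 < qk k.
Proof. unfold qk, Rpower; apply exp_pos. Qed.

Lemma qk_pow_k (k : nat) : (1 <= k)%nat -> qk k ^ k = / 2.
Proof.
  intros Hk; rewrite <- Rpower_pow by apply qk_pos; unfold qk; rewrite Rpower_mult.
  assert (0 < INR k) by (apply lt_0_INR; lia).
  replace (- / INR k * INR k) with (- (1)) by (field; lra).
  rewrite Rpower_Ropp, Rpower_1; lra.
Qed.

Lemma qk_le_1 (k : nat) : (1 <= k)%nat -> qk k <= 1.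
Proof.
  intros Hk; destruct (Rle_lt_dec (qk k) 1) as [|Hgt]; auto.
  pose proof (pow_R1_Rle (qk k) k ltac:(lra)) as H1; rewrite qk_pow_k in H1 by exact Hk; lra.
Qed.

Lemma qk_pow_antimono (k a b : nat) : (1 <= k)%nat -> (a <= b)%nat -> qk k ^ b <= qk k ^ a.
Proof. intros Hk; apply pow_le_pow_antimono; split; [apply qk_pos|now apply qk_le_1]. Qed.

Lemma qk_pow_mul_k (k d : nat) : (1 <= k)%nat -> qk k ^ (d * k) = (/ 2) ^ d.
Proof. intros Hk; now rewrite Nat.mul_comm, pow_mult, qk_pow_k. Qed.

Lemma qk_pow_dyadic_window (k t s d L : nat) : (1 <= k)%nat ->
  (s <= t + d * k <= s + k)%nat ->
  dyadic_window (qk k ^ t * 2 ^ (L + 1)) (qk k ^ s) (L + d).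
Proof.
  intros Hk Hs.
  assert (Hlow : qk k ^ t * 2 ^ (L + 1) * (/ 2) ^ (L + d + 1) = qk k ^ (t + d * k)).
  { rewrite (pow_add (qk k) t (d * k)), qk_pow_mul_k by exact Hk.
    replace (L + d + 1)%nat with ((L + 1) + d)%nat by lia; rewrite (pow_add (/ 2) (L + 1) d).
    transitivity (qk k ^ t * (/ 2) ^ d * ((/ 2) ^ (L + 1) * 2 ^ (L + 1))); [ring|].
    rewrite pow_inv2_mul_pow2; ring. }
  assert (Hhigh : qk k ^ t * 2 ^ (L + 1) * (/ 2) ^ (L + d)
                  = 2 * (qk k ^ t * 2 ^ (L + 1) * (/ 2) ^ (L + d + 1)))
    by (rewrite (pow_add _ (L + d) 1); field).
  unfold dyadic_window; rewrite Hhigh, Hlow; split.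
  - apply qk_pow_antimono; lia.
  - pose proof (qk_pow_antimono k (t + d * k) (s + k) Hk ltac:(lia)) as Hsk.
    rewrite (pow_add (qk k) s k), qk_pow_k in Hsk by exact Hk; lra.
Qed.

Lemma source_A_grid (k : nat) : source_A k = grid k (fun i j => qk k ^ (i + j)).
Proof. reflexivity. Qed.

Lemma source_A_uniform (k : nat) : (1 <= k)%nat -> alpha_uniform (source_A k) 4.
Proof.
  intros Hk; rewrite source_A_grid; split; [lra|split].
  - intros x Hx; apply In_grid in Hx as [i [j [_ [_ ->]]]]; apply pow_lt, qk_pos.
  - intros x y Hx Hy.
    apply In_grid in Hx as [i [j [_ [_ ->]]]]; apply In_grid in Hy as [i' [j' [Hi' [Hj' ->]]]].
    pose proof (qk_pow_antimono k 0 (i + j) Hk ltac:(lia)).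
    pose proof (qk_pow_antimono k (i' + j') (2 * k) Hk ltac:(lia)).
    rewrite qk_pow_mul_k in * by exact Hk; simpl in *; lra.
Qed.

Definition source_lengths (k t h g L : nat) : list nat :=
  grid k (fun i j => (L + depth_offset k t h g i j)%nat).

Lemma source_lengths_range (k t h g L l : nat) :
  In l (source_lengths k t h g L) -> (L <= l <= L + 2)%nat.
Proof.
  intros Hl; apply In_grid in Hl as [i [j [_ [_ ->]]]].
  pose proof (depth_offset_le_2 k t h g i j); lia.
Qed.

Lemma source_A_dyadic_window (k t h g L : nat) : (1 <= k)%nat -> (t <= k)%nat ->
  Forall2 (dyadic_window (qk k ^ t * 2 ^ (L + 1))) (source_A k) (source_lengths k t h g L).
Proof.
  intros Hk Ht; rewrite source_A_grid; apply Forall2_grid; intros i j Hi Hj.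
  apply qk_pow_dyadic_window; [exact Hk|].
  unfold depth_offset; case_comparisons; lia.
Qed.

Lemma kraft_sum_source_lengths (k t h g L : nat) :
  offset_kraft_count k t h g = (2 ^ (L + 2))%nat -> kraft_sum (source_lengths k t h g L) = 1.
Proof.
  intros Hcount.
  assert (Hbound : Forall (fun l => (l <= L + 2)%nat) (source_lengths k t h g L))
    by (apply Forall_forall; intros l Hl; apply source_lengths_range in Hl; lia).
  pose proof (kraft_sum_count (L + 2) _ Hbound) as Hk.
  assert (Hcount' : kraft_count (L + 2) (source_lengths k t h g L) = offset_kraft_count k t h g).
  { unfold kraft_count, source_lengths, offset_kraft_count; rewrite map_grid; f_equal.
    apply grid_ext; intros i j _ _; f_equal; lia. }
  rewrite Hcount', Hcount, pow_INR in Hk; simpl INR in Hk; replace (1 + 1) with 2 in Hk by lra.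
  pose proof (pow_lt 2 (L + 2) ltac:(lra)); nra.
Qed.

Theorem lemma5 (k : nat) (hk : (1 <= k)%nat) :
  alpha_uniform (source_A k) 4 /\
  exists c : list (list bool),
    optimal_code (source_A k) c /\ (fringe_thickness c <= 2)%nat.
Proof.
  split; [now apply source_A_uniform|].
  destruct (exists_offset_parameters k hk) as [t [h [g [L [Ht Hcount]]]]].
  pose proof (kraft_sum_source_lengths k t h g L Hcount) as Hkraft.
  destruct (kraft_converse (source_lengths k t h g L)) as [c [Hc Hpf]]; [lra|].
  exists c; split.
  - apply (optimal_code_of_dyadic_window (qk k ^ t * 2 ^ (L + 1))); rewrite ?Hc; auto.
    + apply Rmult_lt_0_compat; apply pow_lt; [apply qk_pos|lra].
    + apply source_A_dyadic_window; lia.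
  - apply (fringe_thickness_le c L 2); intros w Hw.
    apply (source_lengths_range k t h g); rewrite <- Hc; now apply in_map.
Qed.
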